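(* Let $n\ge0$ and $\mathbf{x}\in\mathbb{R}^{n+1}$ with $0\le\mathbf{x}_0<\dots<\mathbf{x}_n\le1$. Then $$\kappa_{M^n\to2}\big(V^n(\mathbf{x})\big)\le(n+1)^{3/2}\,\|\mathbf{w}^n\|_2.$$
   Context: $B^n_j(x)=\binom{n}{j}x^j(1-x)^{n-j}$; $V^n(\mathbf{x})$ is the Bernstein–Vandermonde matrix $V^n_{ij}(\mathbf{x})=B^n_j(\mathbf{x}_i)$. $M^n_{ij}=\int_0^1B^n_i(x)B^n_j(x)\,dx$ is the Bernstein mass matrix, $\|\mathbf{y}\|_{M^n}=\sqrt{\mathbf{y}^TM^n\mathbf{y}}$, $\|A\|_{M^n\to2}=\max_{\mathbf{y}\ne0}\|A\mathbf{y}\|_2/\|\mathbf{y}\|_{M^n}$, $\|A\|_{2\to M^n}=\max_{\mathbf{y}\ne0}\|A\mathbf{y}\|_{M^n}/\|\mathbf{y}\|_2$, and $\kappa_{M^n\to2}(A)=\|A\|_{M^n\to2}\|A^{-1}\|_{2\to M^n}$. For $0\le j\le n$, $\ell^{j,n}(x)=\prod_{i\ne j}\frac{x-\mathbf{x}_i}{\mathbf{x}_j-\mathbf{x}_i}$ is the $j$-th Lagrange polynomial for the nodes $\mathbf{x}$, and $\mathbf{w}^n\in\mathbb{R}^{n+1}$ has entries $\mathbf{w}^n_j=\|\ell^{j,n}\|_{L^2(0,1)}$. *)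

From mathcomp Require Import all_boot all_order all_algebra.
From mathcomp Require Import all_classical all_reals all_analysis.
Set Implicit Arguments. Unset Strict Implicit. Unset Printing Implicit Defensive.
Import Order.TTheory GRing.Theory Num.Theory.
Local Open Scope ring_scope.
Local Open Scope classical_set_scope.

Section Defs.
Variable R : realType.

Definition bernstein (n j : nat) (t : R) : R :=
  ('C(n, j))%:R * t ^+ j * (1 - t) ^+ (n - j).

Definition bernVander (n : nat) (x : 'I_n.+1 -> R) : 'M[R]_n.+1 :=
  \matrix_(i, j) bernstein n j (x i).

Definition int01 (f : R -> R) : R :=
  Rintegral (@lebesgue_measure R) `[0%R, 1%R] f.

Definition massmx (n : nat) : 'M[R]_n.+1 :=
  \matrix_(i, j) int01 (fun t => bernstein n i t * bernstein n j t).

Definition norm2 (m : nat) (y : 'cV[R]_m) : R :=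
  Num.sqrt (\sum_i y i 0 ^+ 2).

Definition normM (n : nat) (y : 'cV[R]_n.+1) : R :=
  Num.sqrt ((y^T *m massmx n *m y) 0 0).

Definition opnorm_M2 (n : nat) (A : 'M[R]_n.+1) : R :=
  sup [set r | exists y : 'cV[R]_n.+1, y != 0 /\ r = norm2 (A *m y) / normM y].

Definition opnorm_2M (n : nat) (A : 'M[R]_n.+1) : R :=
  sup [set r | exists y : 'cV[R]_n.+1, y != 0 /\ r = normM (A *m y) / norm2 y].

Definition kappa_M2 (n : nat) (A : 'M[R]_n.+1) : R :=
  opnorm_M2 A * opnorm_2M (invmx A).

Definition lagrange (n : nat) (x : 'I_n.+1 -> R) (j : 'I_n.+1) (t : R) : R :=
  \prod_(i < n.+1 | i != j) ((t - x i) / (x j - x i)).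

Definition wvec (n : nat) (x : 'I_n.+1 -> R) : 'cV[R]_n.+1 :=
  \col_j Num.sqrt (int01 (fun t => lagrange x j t ^+ 2)).

End Defs.

From Pilot Require Import Defs.
From mathcomp Require Import all_boot all_order all_algebra.
From mathcomp Require Import all_classical all_reals all_analysis.
From mathcomp Require Import ring lra zify.
Import Order.TTheory GRing.Theory Num.Theory.
Set Implicit Arguments. Unset Strict Implicit. Unset Printing Implicit Defensive.
Import numFieldNormedType.Exports.
Local Open Scope ring_scope.

(* A coefficient vector c stands for the polynomial p_c = sum_j c_j B^n_j of
   degree <= n; then (V c)_i = p_c(x_i), ||c||_{M^n} = ||p_c||_{L^2(0,1)}, and
   V^{-1} z is the coefficient vector of the interpolant sum_j z_j l^{j,n}.
   The theorem is the product of two estimates: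
   (A) ||V c||_2 <= (n+1)^{3/2} ||c||_{M^n}, summing over the n+1 nodes the
       pointwise bound p(t)^2 <= (n+1)^2 ||p||^2 (deg p <= n, t in [0,1]);
   (B) ||V^{-1} z||_{M^n} <= ||z||_2 ||w^n||_2, by the triangle inequality,
       Cauchy-Schwarz in L^2 and Cauchy-Schwarz in R^{n+1}.
   The pointwise bound at t = 1 follows from an explicit reproducing kernel K
   of evaluation at 1 with int_0^1 K^2 = (n+1)^2; rescaling [0,t] and [t,1]
   onto [0,1] extends it to every t in [0,1]. *)

(* Exact integration of polynomials.  [polyint p a b] is the integral of [p]
   over [a, b], computed from an explicit antiderivative; it agrees with the
   Lebesgue integral [int01] on [0, 1] by the fundamental theorem of calculus. *)
Section PolyIntegral.
Variable R : realType.
Implicit Types p q : {poly R}.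

Definition prim p : {poly R} :=
  \poly_(i < (size p).+1) (if i is k.+1 then p`_k / k.+1%:R else 0).

Lemma coef_prim p i : (prim p)`_i = if i is k.+1 then p`_k / k.+1%:R else 0.
Proof.
rewrite coef_poly; case: i => [|k]; first by case: (ltnP 0 _).
case: (ltnP k.+1 (size p).+1) => // H.
by rewrite nth_default ?mul0r.
Qed.

Lemma deriv_prim p : (prim p)^`() = p.
Proof. by apply/polyP => i; rewrite coef_deriv coef_prim -[_ *+ _]mulr_natr divfK. Qed.

Lemma primD p q : prim (p + q) = prim p + prim q.
Proof.
apply/polyP => i; rewrite coefD !coef_prim.
by case: i => [|k]; rewrite ?addr0 // coefD mulrDl.
Qed.

Lemma primZ (c : R) p : prim (c *: p) = c *: prim p.
Proof.
apply/polyP => i; rewrite coefZ !coef_prim.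
by case: i => [|k]; rewrite ?mulr0 // coefZ mulrA.
Qed.

Definition polyint p (a b : R) : R := (prim p).[b] - (prim p).[a].

Lemma polyintD p q a b : polyint (p + q) a b = polyint p a b + polyint q a b.
Proof. by rewrite /polyint primD !hornerD; ring. Qed.

Lemma polyintZ (c : R) p a b : polyint (c *: p) a b = c * polyint p a b.
Proof. by rewrite /polyint primZ !hornerZ; ring. Qed.

Lemma polyintN p a b : polyint (- p) a b = - polyint p a b.
Proof. by rewrite -scaleN1r polyintZ mulN1r. Qed.

Lemma polyint_sum (I : Type) (r : seq I) (P : pred I) (F : I -> {poly R}) a b :
  polyint (\sum_(i <- r | P i) F i) a b = \sum_(i <- r | P i) polyint (F i) a b.
Proof.
have polyint0 : polyint 0 a b = 0 by rewrite -(scale0r 0) polyintZ mul0r.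
exact: (big_morph (fun p => polyint p a b) (fun p q => polyintD p q a b) polyint0).
Qed.

Lemma polyint_split p a t b : polyint p a b = polyint p a t + polyint p t b.
Proof. by rewrite /polyint; ring. Qed.

Lemma deriv_eq0_const p : p^`() = 0 -> p = (p`_0)%:P.
Proof.
move=> dp0; apply/polyP => i; rewrite coefC; case: i => [|k] //=.
have := congr1 (fun q : {poly R} => q`_k) dp0; rewrite coef_deriv coef0.
by move/eqP; rewrite mulrn_eq0 /= => /eqP.
Qed.

Lemma polyint_deriv p q a b : q^`() = p -> polyint p a b = q.[b] - q.[a].
Proof.
move=> dq; have : (q - prim p)^`() = 0 by rewrite derivB deriv_prim dq subrr.
move/deriv_eq0_const => E.
have -> : q = prim p + ((q - prim p)`_0)%:P by rewrite -E addrC subrK.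
by rewrite /polyint !hornerD !hornerC; ring.
Qed.

Lemma polyint_comp p (a c u v : R) :
  polyint (p \Po (a%:P + c *: 'X)) u v * c = polyint p (a + c * u) (a + c * v).
Proof.
set L := a%:P + c *: 'X.
have dL : L^`() = c%:P by rewrite /L derivD derivC derivZ derivX add0r alg_polyC.
have : (prim p \Po L)^`() = c *: (p \Po L).
  by rewrite deriv_comp deriv_prim dL mulrC mul_polyC.
move/polyint_deriv => H; rewrite mulrC -polyintZ H.
by rewrite !horner_comp /L !hornerE /polyint.
Qed.

Lemma polyint_Xn k : polyint 'X^k 0 1 = (k.+1%:R)^-1.
Proof.
rewrite (@polyint_deriv _ ((k.+1%:R)^-1 *: 'X^(k.+1))).
  by rewrite !hornerZ !hornerXn expr1n expr0n /= mulr0 subr0 mulr1.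
rewrite derivZ derivXn /=.
have -> : ('X^k *+ k.+1 : {poly R}) = k.+1%:R *: 'X^k by rewrite scaler_nat.
by rewrite scalerA mulVf ?scale1r.
Qed.

Lemma int01_polyint p : int01 (horner p) = polyint p 0 1.
Proof.
rewrite /int01 /Rintegral (@continuous_FTC2 _ _ (horner (prim p))) //.
- by apply: continuous_subspaceT => t; exact: continuous_horner.
- split.
  + by move=> t _; exact: derivable_horner.
  + by apply: cvg_at_right_filter; exact: continuous_horner.
  + by apply: cvg_at_left_filter; exact: continuous_horner.
- by move=> t _; rewrite -derivE deriv_prim.
Qed.

Lemma polyint_sqr_ge0 p : 0 <= polyint (p * p) 0 1.
Proof.
have sqr_ge0_at t : 0 <= (p * p).[t] by rewrite hornerM -expr2 sqr_ge0.
by rewrite -int01_polyint /int01; apply: Rintegral_ge0 => t _; exact: sqr_ge0_at.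
Qed.

Lemma polyint_quad k (a : 'I_k -> R) (F : 'I_k -> {poly R}) :
  polyint ((\sum_(i < k) a i *: F i) * (\sum_(j < k) a j *: F j)) 0 1 =
  \sum_(i < k) \sum_(j < k) a i * a j * polyint (F i * F j) 0 1.
Proof.
rewrite mulr_suml polyint_sum; apply: eq_bigr => i _.
rewrite mulr_sumr polyint_sum; apply: eq_bigr => j _.
by rewrite -scalerAl -scalerAr !polyintZ mulrA.
Qed.

End PolyIntegral.

Lemma poly_eq_on_nodes (R : realType) k (p q : {poly R}) (s : 'I_k -> R) :
  injective s -> (size p <= k)%N -> (size q <= k)%N ->
  (forall i, p.[s i] = q.[s i]) -> p = q.
Proof.
move=> s_inj sp sq psq; apply/eqP; rewrite -subr_eq0; apply/eqP.
apply: (@roots_geq_poly_eq0 _ _ [seq s i | i <- enum 'I_k]).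
- by apply/allP => z /mapP [i _ ->]; rewrite rootE !hornerE psq subrr.
- by rewrite map_inj_uniq ?enum_uniq.
- rewrite size_map size_enum_ord; apply: (leq_trans (size_polyD _ _)).
  by rewrite size_polyN geq_max sp sq.
Qed.

Lemma size_sum_leq (R : realType) k m (F : 'I_k -> {poly R}) :
  (forall i, (size (F i) <= m)%N) -> (size (\sum_(i < k) F i)%R <= m)%N.
Proof.
move=> szF; apply/leq_sizeP => j hj; rewrite coef_sum big1 // => i _.
by rewrite nth_default // (leq_trans (szF i) hj).
Qed.

Section ProductOfLinearFactors.
Variables (R : realType) (n : nat) (F : 'I_n.+1 -> R).

Let prodF : {poly R} := \prod_(j < n.+1) ('X - (F j)%:P).

Let prodF_seq : prodF = \prod_(a <- [seq F j | j <- enum 'I_n.+1]) ('X - a%:P).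
Proof. by rewrite big_map enumT. Qed.

Lemma size_prod_linear : size prodF = n.+2.
Proof. by rewrite prodF_seq size_prod_XsubC size_map size_enum_ord. Qed.

Lemma lead_prod_linear : prodF`_n.+1 = 1.
Proof.
have := lead_coef_prod_XsubC (index_enum 'I_n.+1) xpredT F.
by rewrite /lead_coef size_prod_linear.
Qed.

Lemma subleading_prod_linear : prodF`_n = - \sum_(j < n.+1) F j.
Proof.
have := @coefPn_prod_XsubC _ [seq F j | j <- enum 'I_n.+1].
by rewrite size_map size_enum_ord -prodF_seq big_map enumT => ->.
Qed.

End ProductOfLinearFactors.

(* The reproducing kernel of evaluation at 1.  With poles z_i = -(i+1) and
   D = prod_i (X - z_i), Z = prod_i (X - i), the numerator N = D - Z has degree
   <= n, so N/D = 1 - Z/D = sum_i r_i / (X - z_i) with residues r_i.  Evaluating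
   at m <= n gives sum_i r_i / (m + i + 1) = 1, i.e. K = sum_i r_i X^i satisfies
   int_0^1 t^m K(t) dt = 1; comparing coefficients of X^n gives
   sum_i r_i = (n+1)^2. *)
Section ReproducingKernel.
Variables (R : realType) (n : nat).
Implicit Types p : {poly R}.

Definition pole (i : 'I_n.+1) : R := - (i.+1%:R).
Definition polesPoly : {poly R} := \prod_(j < n.+1) ('X - (pole j)%:P).
Definition zerosPoly : {poly R} := \prod_(j < n.+1) ('X - ((j : nat)%:R)%:P).
Definition kernelNum : {poly R} := polesPoly - zerosPoly.
Definition cofactor (i : 'I_n.+1) : {poly R} :=
  \prod_(j < n.+1 | j != i) ('X - (pole j)%:P).
Definition residue (i : 'I_n.+1) : R :=
  kernelNum.[pole i] / \prod_(j < n.+1 | j != i) (pole i - pole j).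

Lemma pole_inj : injective pole.
Proof.
by move=> i j /oppr_inj/eqP; rewrite eqr_nat eqSS => /eqP/val_inj.
Qed.

(* The leading coefficients of D and Z cancel. *)
Lemma size_kernelNum : (size kernelNum <= n.+1)%N.
Proof.
apply/leq_sizeP => j; rewrite leq_eqVlt => /orP [/eqP <-|hj].
  by rewrite coefB !lead_prod_linear subrr.
by rewrite coefB !nth_default ?subrr // size_prod_linear.
Qed.

(* sum_i (i + 1) + sum_i i = (n+1)^2. *)
Lemma subleading_kernelNum : kernelNum`_n = (n.+1%:R) ^+ 2.
Proof.
rewrite coefB !subleading_prod_linear /pole sumrN !opprK -big_split /=.
elim: (n.+1) => [|k IH]; first by rewrite big_ord0 expr0n.
rewrite big_ord_recr /= IH -!natrX -!natrD; apply/eqP; rewrite eqr_nat; apply/eqP.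
rewrite !expnS !expn0; lia.
Qed.

Lemma polesPoly_split i : polesPoly = ('X - (pole i)%:P) * cofactor i.
Proof. by rewrite /polesPoly (bigD1 i). Qed.

Lemma cofactor_monic i : cofactor i \is monic.
Proof. exact: monic_prod_XsubC. Qed.

Lemma size_cofactor i : size (cofactor i) = n.+1.
Proof.
have := size_prod_linear pole; rewrite -/polesPoly (polesPoly_split i).
rewrite size_monicM ?monicXsubC ?monic_neq0 ?cofactor_monic //.
by rewrite size_XsubC => -[].
Qed.

Lemma cofactor_at_pole i k :
  (cofactor i).[pole k] = if k == i then \prod_(j < n.+1 | j != i) (pole i - pole j) else 0.
Proof.
rewrite /cofactor horner_prod; case: eqP => [->|/eqP ki].
  by apply: eq_bigr => j _; rewrite hornerXsubC.
by rewrite (bigD1 k) //= hornerXsubC subrr mul0r.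
Qed.

Lemma pole_gaps_neq0 i : \prod_(j < n.+1 | j != i) (pole i - pole j) != 0.
Proof.
apply/prodf_neq0 => j ji; rewrite subr_eq0; apply: contra ji => /eqP eij.
by rewrite (pole_inj eij).
Qed.

(* Partial fraction decomposition of N/D, in polynomial form. *)
Lemma kernelNum_partial_fractions : kernelNum = \sum_(i < n.+1) residue i *: cofactor i.
Proof.
apply: (poly_eq_on_nodes pole_inj size_kernelNum).
  by apply: size_sum_leq => i; rewrite (leq_trans (size_scale_leq _ _)) ?size_cofactor.
move=> k; rewrite horner_sum (bigD1 k) //= big1 => [|i ik].
  by rewrite hornerZ cofactor_at_pole eqxx /residue divfK ?addr0 ?pole_gaps_neq0.
by rewrite hornerZ cofactor_at_pole eq_sym (negbTE ik) mulr0.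
Qed.

Lemma sum_residue : \sum_(i < n.+1) residue i = (n.+1%:R) ^+ 2.
Proof.
rewrite -subleading_kernelNum kernelNum_partial_fractions coef_sum.
apply: eq_bigr => i _; rewrite coefZ.
by have /monicP := cofactor_monic i; rewrite /lead_coef size_cofactor => ->; rewrite mulr1.
Qed.

Lemma sub_pole_gt0 (m : nat) i : 0 < m%:R - pole i.
Proof. by rewrite /pole opprK -natrD ltr0n addnS. Qed.

Lemma residue_reproduce (m : nat) : (m <= n)%N ->
  \sum_(i < n.+1) residue i / (m%:R - pole i) = 1.
Proof.
move=> hm; set D := polesPoly.[m%:R].
have D_neq0 : D != 0.
  by rewrite /D horner_prod; apply/prodf_neq0 => j _; rewrite hornerXsubC gt_eqF ?sub_pole_gt0.
have Z_m : zerosPoly.[m%:R] = 0.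
  rewrite /zerosPoly horner_prod (bigD1 (Ordinal (hm : (m < n.+1)%N))) //=.
  by rewrite hornerXsubC subrr mul0r.
have cofactor_m i : (cofactor i).[m%:R] = D / (m%:R - pole i).
  rewrite /D (polesPoly_split i) hornerM hornerXsubC mulrC mulKf //.
  by rewrite gt_eqF // sub_pole_gt0.
have := congr1 (horner^~ m%:R) kernelNum_partial_fractions.
rewrite /= /kernelNum hornerD hornerN Z_m subr0 horner_sum -/D => D_expand.
apply: (mulfI D_neq0); rewrite mulr1 {2}D_expand mulr_sumr.
by apply: eq_bigr => i _; rewrite hornerZ cofactor_m mulrCA.
Qed.

Definition kernel1 : {poly R} := \sum_(i < n.+1) residue i *: 'X^i.
Local Notation I p := (polyint p 0 1).

Lemma polyint_Xn_kernel1 m : (m <= n)%N -> I ('X^m * kernel1) = 1.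
Proof.
move=> hm; rewrite -[RHS](residue_reproduce hm) /kernel1 mulr_sumr polyint_sum.
apply: eq_bigr => i _.
by rewrite -scalerAr polyintZ -exprD polyint_Xn /pole opprK -natrD addnS.
Qed.

Lemma poly_monomial_expand p : (size p <= n.+1)%N -> p = \sum_(m < n.+1) p`_m *: 'X^m.
Proof.
move=> sp; rewrite -poly_def; apply/polyP => k; rewrite coef_poly.
by case: ltnP => // h; rewrite nth_default // (leq_trans sp h).
Qed.

Lemma size_kernel1 : (size kernel1 <= n.+1)%N.
Proof. by apply: size_sum_leq => i; rewrite (leq_trans (size_scale_leq _ _)) ?size_polyXn. Qed.

Lemma horner1_coef_sum p : (size p <= n.+1)%N -> p.[1] = \sum_(m < n.+1) p`_m.
Proof.
move=> sp; rewrite {1}(poly_monomial_expand sp) horner_sum; apply: eq_bigr => i _.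
by rewrite hornerZ hornerXn expr1n mulr1.
Qed.

Lemma polyint_kernel1 p : (size p <= n.+1)%N -> I (p * kernel1) = p.[1].
Proof.
move=> sp; rewrite (horner1_coef_sum sp) {1}(poly_monomial_expand sp).
rewrite mulr_suml polyint_sum; apply: eq_bigr => i _.
by rewrite -scalerAl polyintZ polyint_Xn_kernel1 ?mulr1 // -ltnS.
Qed.

Lemma polyint_kernel1_sqr : I (kernel1 * kernel1) = (n.+1%:R) ^+ 2.
Proof.
rewrite polyint_kernel1 ?size_kernel1 // (horner1_coef_sum size_kernel1) -sum_residue.
apply: eq_bigr => i _; rewrite /kernel1 coef_sum (bigD1 i) //= big1 => [|j ji].
  by rewrite coefZ coefXn eqxx mulr1 addr0.
rewrite coefZ coefXn; case: eqP => [/val_inj eij|_]; last by rewrite mulr0.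
by rewrite eij eqxx in ji.
Qed.

End ReproducingKernel.

Lemma size_comp_affine (R : realType) m (p : {poly R}) (a c : R) :
  (size p <= m.+1)%N -> (size (p \Po (a%:P + c *: 'X))%R <= m.+1)%N.
Proof.
move=> sp; apply: (leq_trans (size_comp_poly_leq _ _)).
have affine_deg : ((size (a%:P + c *: 'X)%R).-1 <= 1)%N.
  have := size_polyD a%:P (c *: 'X); have := size_polyC_leq1 a.
  have := size_scale_leq c ('X : {poly R}); rewrite size_polyX => scaleX.
  have {}scaleX : (size (c *: ('X : {poly R})) <= 2)%N by exact: scaleX.
  lia.
have := leq_mul (leqnn (size p).-1) affine_deg; rewrite muln1; lia.
Qed.

Section PointwiseBound.
Variables (R : realType) (n : nat).
Implicit Types p : {poly R}.
Local Notation I p := (polyint p 0 1).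

(* At t = 1, by Cauchy-Schwarz against the kernel: expand
   0 <= int (p - c K)^2 with c = p(1) / (n+1)^2. *)
Lemma eval1_sqr_le p : (size p <= n.+1)%N -> p.[1] ^+ 2 <= (n.+1%:R) ^+ 2 * I (p * p).
Proof.
move=> sp; set s : R := (n.+1%:R) ^+ 2; set a := p.[1].
have s_gt0 : 0 < s by rewrite /s exprn_gt0 // ltr0n.
set c := a / s.
have cs : c * s = a by rewrite /c divfK // gt_eqF.
have expand : (p - c *: kernel1 R n) * (p - c *: kernel1 R n) =
    p * p - c *: (p * kernel1 R n) - c *: (p * kernel1 R n)
    + (c * c) *: (kernel1 R n * kernel1 R n).
  by rewrite -!mul_polyC polyCM; ring.
have := polyint_sqr_ge0 (p - c *: kernel1 R n).
rewrite expand !polyintD !polyintN !polyintZ polyint_kernel1 // polyint_kernel1_sqr.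
rewrite -/s -/a -[c * c * s]mulrA cs => expanded_ge0.
have : 0 <= s * (I (p * p) - c * a) by apply: mulr_ge0; [exact: ltW | lra].
by rewrite mulrBr mulrA [s * c]mulrC cs -expr2 subr_ge0.
Qed.

(* Rescaling [0, t] onto [0, 1]. *)
Lemma eval_sqr_le_initial p t : (size p <= n.+1)%N -> 0 <= t ->
  p.[t] ^+ 2 * t <= (n.+1%:R) ^+ 2 * polyint (p * p) 0 t.
Proof.
move=> sp t_ge0; set q := p \Po (0%:P + t *: 'X).
have q1 : q.[1] = p.[t] by rewrite /q horner_comp !hornerE.
have := eval1_sqr_le (size_comp_affine 0 t sp); rewrite q1 -comp_polyM polyC0 add0r => bound.
have := polyint_comp (p * p) 0 t 0 1; rewrite mulr0 mulr1 !add0r => <-.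
by rewrite mulrA; apply: ler_wpM2r.
Qed.

(* Apply the previous bound on [0, t] to p and on [0, 1 - t] to p(1 - .). *)
Lemma eval_sqr_le p t : (size p <= n.+1)%N -> 0 <= t <= 1 ->
  p.[t] ^+ 2 <= (n.+1%:R) ^+ 2 * I (p * p).
Proof.
move=> sp /andP [t_ge0 t_le1].
have left_part := eval_sqr_le_initial sp t_ge0.
set q := p \Po (1%:P + (-1) *: 'X).
have q_1t : q.[1 - t] = p.[t] by rewrite /q horner_comp !hornerE; congr p.[_]; ring.
have t'_ge0 : 0 <= 1 - t by rewrite subr_ge0.
have := eval_sqr_le_initial (size_comp_affine 1 (-1) sp) t'_ge0.
rewrite q_1t -comp_polyM.
have reflect_int : polyint ((p * p) \Po (1%:P + (-1) *: 'X)) 0 (1 - t) = polyint (p * p) t 1.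
  have end0 : 1 + -1 * 0 = 1 :> R by ring.
  have end1 : 1 + -1 * (1 - t) = t by ring.
  have := polyint_comp (p * p) 1 (-1) 0 (1 - t).
  by rewrite end0 end1 mulrN1 /polyint => ?; lra.
rewrite reflect_int (polyint_split (p * p) 0 t 1) mulrDr => right_part.
lra.
Qed.

End PointwiseBound.

Section BernsteinBasis.
Variables (R : realType) (n : nat).

Definition bernpoly (j : nat) : {poly R} :=
  ('C(n, j))%:R *: ('X^j * (1 - 'X) ^+ (n - j)).

Lemma bernpolyE j t : (bernpoly j).[t] = bernstein n j t.
Proof. by rewrite /bernpoly /bernstein !hornerE. Qed.

Lemma size_bernpoly (j : 'I_n.+1) : (size (bernpoly j) <= n.+1)%N.
Proof.
apply: (leq_trans (size_scale_leq _ _)); apply: (leq_trans (size_polyMleq _ _)).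
have size_1X : size (1 - 'X : {poly R}) = 2.
  by rewrite -opprB size_polyN -polyC1 size_XsubC.
set q : {poly R} := (1 - 'X) ^+ (n - j).
have size_q : (size q).-1 = (n - j)%N by rewrite /q size_exp size_1X mul1n.
rewrite size_polyXn; have := ltn_ord j; lia.
Qed.

Lemma coef_bernpoly_lt j k : (k < j)%N -> (bernpoly j)`_k = 0.
Proof. by move=> kj; rewrite coefZ coefXnM kj mulr0. Qed.

Lemma coef_bernpoly_diag j : (bernpoly j)`_j = ('C(n, j))%:R.
Proof.
rewrite coefZ coefXnM ltnn subnn -horner_coef0.
by rewrite !hornerE subr0 expr1n mulr1.
Qed.

Lemma bernpoly_free (c : 'I_n.+1 -> R) :
  \sum_(j < n.+1) c j *: bernpoly j = 0 -> forall j, c j = 0.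
Proof.
move=> comb0.
suff lt_k : forall k (j : 'I_n.+1), (j < k)%N -> c j = 0 by move=> j; apply: (lt_k n.+1).
elim=> [//|k IH] j jk; case: (ltnP j k) => [/IH //|kj].
have ejk : nat_of_ord j = k by lia.
have := congr1 (fun p : {poly R} => p`_k) comb0; rewrite coef_sum coef0 (bigD1 j) //= big1 => [|i ij].
  rewrite addr0 coefZ -ejk coef_bernpoly_diag => /eqP; rewrite mulf_eq0 pnatr_eq0.
  by rewrite eqn0Ngt bin_gt0 -ltnS ltn_ord orbF => /eqP.
rewrite coefZ; case: (ltnP i k) => [/IH -> |ki]; first by rewrite mul0r.
rewrite coef_bernpoly_lt ?mulr0 //.
have : nat_of_ord i != nat_of_ord j by [].
lia.
Qed.

Definition bernComb (c : 'cV[R]_n.+1) : {poly R} := \sum_(j < n.+1) c j 0 *: bernpoly j.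

Lemma size_bernComb c : (size (bernComb c) <= n.+1)%N.
Proof.
by apply: size_sum_leq => j; rewrite (leq_trans (size_scale_leq _ _)) ?size_bernpoly.
Qed.

Lemma normM_bernComb (c : 'cV[R]_n.+1) :
  normM c = Num.sqrt (polyint (bernComb c * bernComb c) 0 1).
Proof.
rewrite /normM /bernComb polyint_quad; congr Num.sqrt.
rewrite !mxE [RHS]exchange_big /=; apply: eq_bigr => j _.
rewrite !mxE mulr_suml; apply: eq_bigr => i _.
rewrite mulrAC !mxE -int01_polyint; congr (_ * int01 _).
by apply: funext => t; rewrite hornerM !bernpolyE.
Qed.

End BernsteinBasis.

Section BernsteinVandermonde.
Variables (R : realType) (n : nat) (x : 'I_n.+1 -> R).
Hypothesis x_incr : forall i j : 'I_n.+1, (i < j)%N -> x i < x j.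
Local Notation V := (bernVander x).

Lemma nodes_inj : injective x.
Proof.
move=> i j xij; apply/eqP; case: (ltngtP i j) => [ij|ji|/val_inj -> //].
  by have := x_incr ij; rewrite xij ltxx.
by have := x_incr ji; rewrite xij ltxx.
Qed.

Lemma bernVander_mul c i : (V *m c) i 0 = (bernComb c).[x i].
Proof.
rewrite !mxE /bernComb horner_sum; apply: eq_bigr => j _.
by rewrite mxE hornerZ bernpolyE mulrC.
Qed.

Lemma bernVander_unit : V \in unitmx.
Proof.
rewrite -unitmx_tr -row_free_unit -kermx_eq0.
apply: contraT => /rowV0Pn [v /sub_kermxP vV0 v_neq0].
have Vv0 : V *m v^T = 0 by rewrite -(trmxK V) -trmx_mul vV0 trmx0.
have comb0 : bernComb v^T = 0.
  apply: (poly_eq_on_nodes nodes_inj (size_bernComb _)); first by rewrite size_poly0.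
  by move=> i; rewrite -bernVander_mul Vv0 mxE horner0.
case/eqP: v_neq0; apply/matrixP => i j.
by rewrite (ord1 i) [RHS]mxE; have := bernpoly_free comb0 j; rewrite mxE.
Qed.

Definition lagrpoly (j : 'I_n.+1) : {poly R} :=
  \prod_(i < n.+1 | i != j) ((x j - x i)^-1 *: ('X - (x i)%:P)).

Lemma lagrpolyE j t : (lagrpoly j).[t] = Defs.lagrange x j t.
Proof.
rewrite /lagrpoly /Defs.lagrange horner_prod; apply: eq_bigr => i _.
by rewrite hornerZ hornerXsubC mulrC.
Qed.

Lemma size_lagrpoly j : (size (lagrpoly j) <= n.+1)%N.
Proof.
rewrite /lagrpoly scaler_prod; apply: (leq_trans (size_scale_leq _ _)).
set Q := \prod_(i < n.+1 | i != j) ('X - (x i)%:P).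
have Q_neq0 : Q != 0 by rewrite monic_neq0 // monic_prod_XsubC.
have := size_prod_linear x; rewrite (bigD1 j) //= size_monicM ?monicXsubC //.
by rewrite size_XsubC -/Q /= => -[]; rewrite add0n => ->.
Qed.

Lemma lagrpoly_node j k : (lagrpoly j).[x k] = (k == j)%:R.
Proof.
rewrite /lagrpoly horner_prod; case: (eqVneq k j) => [->|kj].
  rewrite big1 // => i ij; rewrite hornerZ hornerXsubC mulVf // subr_eq0.
  by apply: contra ij => /eqP/nodes_inj ->.
by rewrite (bigD1 k) //= hornerZ hornerXsubC subrr mulr0 mul0r.
Qed.

Definition lagrComb (z : 'cV[R]_n.+1) : {poly R} := \sum_(j < n.+1) z j 0 *: lagrpoly j.

Lemma lagrComb_node z k : (lagrComb z).[x k] = z k 0.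
Proof.
rewrite /lagrComb horner_sum (bigD1 k) //= big1 => [|i ik].
  by rewrite hornerZ lagrpoly_node eqxx mulr1 addr0.
by rewrite hornerZ lagrpoly_node eq_sym (negbTE ik) mulr0.
Qed.

(* Both sides interpolate z at the n+1 nodes. *)
Lemma bernComb_invV z : bernComb (invmx V *m z) = lagrComb z.
Proof.
apply: (poly_eq_on_nodes nodes_inj (size_bernComb _)).
  by apply: size_sum_leq => j; rewrite (leq_trans (size_scale_leq _ _)) ?size_lagrpoly.
by move=> k; rewrite lagrComb_node -bernVander_mul mulKVmx // bernVander_unit.
Qed.

End BernsteinVandermonde.

Section CauchySchwarz.
Variable R : realType.

Lemma quadratic_form_disc (A B C : R) : 0 <= A -> 0 <= C ->
  (forall s t, 0 <= s ^+ 2 * A + 2 * s * t * B + t ^+ 2 * C) -> B ^+ 2 <= A * C.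
Proof.
move=> A_ge0 C_ge0 form_ge0.
have [C_gt0|] := ltP 0 C; first by have := form_ge0 C (- B); nra.
rewrite le_eqVlt ltNge C_ge0 orbF => /eqP C0; subst C.
have := form_ge0 (2 * B) (- (A + 1)); nra.
Qed.

Lemma polyint_cauchy_schwarz (p q : {poly R}) :
  `|polyint (p * q) 0 1| <=
  Num.sqrt (polyint (p * p) 0 1) * Num.sqrt (polyint (q * q) 0 1).
Proof.
rewrite -sqrtrM ?polyint_sqr_ge0 // -sqrtr_sqr; apply: ler_wsqrtr.
apply: quadratic_form_disc; rewrite ?polyint_sqr_ge0 // => s t.
have := polyint_sqr_ge0 (s *: p + t *: q).
have -> : (s *: p + t *: q) * (s *: p + t *: q) =
   (s * s) *: (p * p) + (s * t) *: (p * q) + (s * t) *: (p * q) + (t * t) *: (q * q).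
  by rewrite -!mul_polyC !polyCM; ring.
by rewrite !polyintD !polyintZ; lra.
Qed.

Lemma sum_cauchy_schwarz k (a b : 'I_k -> R) :
  (\sum_(i < k) a i * b i) ^+ 2 <= (\sum_(i < k) a i ^+ 2) * (\sum_(i < k) b i ^+ 2).
Proof.
have sum_sqr_ge0 (c : 'I_k -> R) : 0 <= \sum_(i < k) c i ^+ 2.
  by apply: sumr_ge0 => i _; rewrite sqr_ge0.
apply: quadratic_form_disc => // s t.
have -> : s ^+ 2 * (\sum_(i < k) a i ^+ 2) + 2 * s * t * (\sum_(i < k) a i * b i)
    + t ^+ 2 * (\sum_(i < k) b i ^+ 2) = \sum_(i < k) (s * a i + t * b i) ^+ 2.
  rewrite !mulr_sumr -!big_split /=; apply: eq_bigr => i _; ring.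
exact: sum_sqr_ge0.
Qed.

End CauchySchwarz.

Section Estimates.
Variables (R : realType) (n : nat) (x : 'I_n.+1 -> R).
Hypothesis x0_ge0 : 0 <= x ord0.
Hypothesis xn_le1 : x ord_max <= 1.
Hypothesis x_incr : forall i j : 'I_n.+1, (i < j)%N -> x i < x j.
Local Notation V := (bernVander x).
Local Notation I p := (polyint p 0 1).

Lemma nodes_in01 i : 0 <= x i <= 1.
Proof.
apply/andP; split.
  case: (ltnP 0 i) => i_gt0; first by apply: (le_trans x0_ge0); apply/ltW/x_incr.
  by have -> : i = ord0 by apply: val_inj => /=; lia.
case: (ltnP i n) => i_ltn; first by apply: (le_trans _ xn_le1); apply/ltW/x_incr.
by have -> : i = ord_max by apply: val_inj => /=; have := ltn_ord i; lia.
Qed.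

(* (A): sum_i p_c(x_i)^2 <= (n+1) (n+1)^2 ||p_c||^2. *)
Lemma norm2_bernVander_le (c : 'cV[R]_n.+1) :
  norm2 (V *m c) <= Num.sqrt ((n.+1%:R) ^+ 3) * normM c.
Proof.
rewrite /norm2 normM_bernComb -sqrtrM ?exprn_ge0 ?ler0n //; apply: ler_wsqrtr.
under eq_bigr => i _ do rewrite bernVander_mul.
apply: le_trans (ler_sum _ (fun i _ => eval_sqr_le (size_bernComb c) (nodes_in01 i))) _.
by rewrite sumr_const card_ord -[_ *+ n.+1]mulr_natr [_ ^+ 3]exprSr mulrAC.
Qed.

(* (B): ||sum_j z_j l_j|| <= sum_j |z_j| w_j <= ||z||_2 ||w||_2. *)
Lemma normM_invV_le (z : 'cV[R]_n.+1) :
  normM (invmx V *m z) <= norm2 z * norm2 (wvec x).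
Proof.
pose w j := Num.sqrt (I (lagrpoly x j * lagrpoly x j)).
have wvecE j : wvec x j 0 = w j.
  rewrite mxE /w -int01_polyint; congr (Num.sqrt (int01 _)); apply: funext => t.
  by rewrite hornerM lagrpolyE expr2.
rewrite normM_bernComb bernComb_invV // /lagrComb polyint_quad /norm2 -sqrtrM; last first.
  by apply: sumr_ge0 => i _; rewrite sqr_ge0.
apply: ler_wsqrtr.
have triangle : \sum_(i < n.+1) \sum_(j < n.+1)
    z i 0 * z j 0 * I (lagrpoly x i * lagrpoly x j) <= (\sum_(i < n.+1) `|z i 0| * w i) ^+ 2.
  rewrite expr2 mulr_suml; apply: ler_sum => i _; rewrite mulr_sumr.
  apply: ler_sum => j _; apply: (le_trans (ler_norm _)); rewrite !normrM mulrACA.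
  by apply: ler_wpM2l; [rewrite mulr_ge0 | exact: polyint_cauchy_schwarz].
apply: (le_trans triangle); apply: (le_trans (sum_cauchy_schwarz _ _)).
apply: ler_pM; try by apply: sumr_ge0 => i _; rewrite sqr_ge0.
- by apply/ler_sum => i _; rewrite real_normK ?num_real.
- by apply/ler_sum => i _; rewrite wvecE.
Qed.

End Estimates.

Section OperatorNorms.
Variable R : realType.
Local Open Scope classical_set_scope.

Lemma sup_ratio_le (T : Type) (P : T -> Prop) (f g : T -> R) (B : R) (y0 : T) :
  P y0 -> 0 <= B -> (forall y, 0 <= f y) -> (forall y, 0 <= g y) ->
  (forall y, f y <= B * g y) ->
  0 <= sup [set r | exists y, P y /\ r = f y / g y] <= B.
Proof.
move=> Py0 B_ge0 f_ge0 g_ge0 fBg; set S := [set r | _].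
have S_le r : S r -> r <= B.
  move=> [y [_ ->]]; have [g0|g_neq0] := eqVneq (g y) 0.
    by rewrite g0 invr0 mulr0.
  by rewrite ler_pdivrMr ?fBg // lt_def g_neq0 g_ge0.
apply/andP; split; last by apply: ge_sup => //; exists (f y0 / g y0), y0.
apply: (@le_trans _ _ (f y0 / g y0)); first by rewrite divr_ge0.
by apply: ub_le_sup; [exists B | exists y0].
Qed.

(* A nonzero test vector, witnessing that the sets defining the norms are nonempty. *)
Lemma cst1_neq0 m : (const_mx 1 : 'cV[R]_m.+1) != 0.
Proof. by apply/eqP => /matrixP /(_ ord0 ord0); rewrite !mxE => /eqP; rewrite oner_eq0. Qed.

Lemma opnorm_M2_le m (A : 'M[R]_m.+1) (B : R) : 0 <= B ->
  (forall y, norm2 (A *m y) <= B * normM y) -> 0 <= opnorm_M2 A <= B.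
Proof.
move=> B_ge0 bound.
apply: (@sup_ratio_le _ (fun y => y != 0) (fun y => norm2 (A *m y)) (@normM R m) B
  (const_mx 1)) => //; first exact: cst1_neq0.
all: by move=> y; exact: sqrtr_ge0.
Qed.

Lemma opnorm_2M_le m (A : 'M[R]_m.+1) (B : R) : 0 <= B ->
  (forall y, normM (A *m y) <= B * norm2 y) -> 0 <= opnorm_2M A <= B.
Proof.
move=> B_ge0 bound.
apply: (@sup_ratio_le _ (fun y => y != 0) (fun y => normM (A *m y)) (@norm2 R m.+1) B
  (const_mx 1)) => //; first exact: cst1_neq0.
all: by move=> y; exact: sqrtr_ge0.
Qed.

End OperatorNorms.

Lemma powR_three_halves (R : realType) (a : R) : 0 <= a -> a `^ (3 / 2) = Num.sqrt (a ^+ 3).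
Proof. by move=> a_ge0; rewrite powRrM powR_mulrn // powR12_sqrt // exprn_ge0. Qed.

Theorem theorem4p3 (R : realType) (n : nat) (x : 'I_n.+1 -> R)
  (hx0 : 0 <= x ord0) (hxn : x ord_max <= 1)
  (hinc : forall i j : 'I_n.+1, (i < j)%N -> x i < x j) :
  kappa_M2 (bernVander x)
    <= (n.+1)%:R `^ (3 / 2 : R) * norm2 (wvec x).
Proof.
have /andP [opV_ge0 opV_le] : 0 <= opnorm_M2 (bernVander x) <= Num.sqrt (n.+1%:R ^+ 3).
  exact: opnorm_M2_le (sqrtr_ge0 _) (norm2_bernVander_le hx0 hxn hinc).
have /andP [opVinv_ge0 opVinv_le] : 0 <= opnorm_2M (invmx (bernVander x)) <= norm2 (wvec x).
  apply: opnorm_2M_le (sqrtr_ge0 _) _ => y; rewrite mulrC; exact: normM_invV_le.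
by rewrite /kappa_M2 powR_three_halves ?ler0n //; exact: ler_pM.
Qed.
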